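(* Let $G$ be a profinite group and assume that $G=H\ltimes N$ is the semidirect product of two closed subgroups $H$ and $N$ (with $N$ normal). If $H$ is a profinite-$C$ group and every open subgroup of $N$ has a $G$-invariant permutable complement in $N$, then $G$ is a profinite-$C$ group.
   Context: A permutable complement of a subgroup $H$ of a group $G$ is a subgroup $K$ with $G=HK$ and $H\cap K=1$. A profinite group $G$ is a profinite-$C$ group if every closed subgroup of $G$ has a closed permutable complement in $G$. *)

From HB Require Import structures.
From mathcomp Require Import all_boot all_order all_algebra.
From mathcomp Require Import all_classical all_reals topology.
Set Implicit Arguments. Unset Strict Implicit. Unset Printing Implicit Defensive.
Local Open Scope classical_set_scope.

Record topGroup (T : topologicalType) := TopGroup {
  gmul : T -> T -> T;
  ginv : T -> T;
  gone : T;
  gmulA : forall x y z, gmul x (gmul y z) = gmul (gmul x y) z;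
  gmul1 : forall x, gmul gone x = x;
  gmulV : forall x, gmul (ginv x) x = gone;
  gmul_cont : continuous (fun p : T * T => gmul p.1 p.2);
  ginv_cont : continuous ginv }.

Definition profinite {T : topologicalType} (g : topGroup T) :=
  [/\ compact [set: T], hausdorff_space T & totally_disconnected [set: T]].

Section Defs.
Context {T : topologicalType} (g : topGroup T).
Local Notation "x * y" := (gmul g x y).
Local Notation "x ^-1" := (ginv g x).
Local Notation one := (gone g).


Definition subgroup (S : set T) :=
  [/\ S one, (forall x y, S x -> S y -> S (x * y)) & (forall x, S x -> S x^-1)].

Definition setmul (A B : set T) : set T :=
  [set z | exists2 a, A a & exists2 b, B b & z = a * b].

Definition closed_in (A K : set T) := exists2 C, closed C & K = C `&` A.
Definition open_in (A K : set T) := exists2 U, open U & K = U `&` A.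

Definition perm_complement (A K L : set T) :=
  [/\ subgroup L, L `<=` A, A = setmul K L & K `&` L = [set one]].

Definition profinite_C_in (A : set T) :=
  forall K, subgroup K -> K `<=` A -> closed_in A K ->
    exists L, closed_in A L /\ perm_complement A K L.

Definition invariant_under (A L : set T) :=
  forall x, A x -> (fun l => x * (l * x^-1)) @` L = L.

Definition normal_in (A N : set T) := N `<=` A /\ invariant_under A N.

Definition semidirect (A H N : set T) :=
  [/\ subgroup H /\ subgroup N, H `<=` A, normal_in A N,
      A = setmul H N & H `&` N = [set one]].
End Defs.

From HB Require Import structures.
From mathcomp Require Import all_boot all_order all_algebra.
From mathcomp Require Import all_classical all_reals topology.
Set Implicit Arguments. Unset Strict Implicit. Unset Printing Implicit Defensive.
Local Open Scope classical_set_scope.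

(* Let K be a closed subgroup of G = H ⋉ N and M = K ∩ N.  By Zorn's lemma,
   with chains handled by compactness, there is a minimal closed G-invariant
   subgroup C of N such that N = M C.  Minimality forces M ∩ C = 1: a
   nontrivial x in M ∩ C lies outside some open normal subgroup W, and if E is
   a G-invariant complement in N of the open subgroup (M ∩ C)(W ∩ N), then
   C ∩ E W is a smaller such supplement that misses x.  Open normal subgroups
   avoiding a given x <> 1 exist because a compact Hausdorff totally
   disconnected space is zero-dimensional.  Finally, if L_H is a closed
   complement in H of H ∩ K N, then L_H C is a closed complement of K in G. *)

Lemma Zorn_minimal (T : Type) (P : set (set T)) :
  (forall F, F `<=` P -> total_on F subset ->
     exists2 X, P X & forall Y, F Y -> X `<=` Y) ->
  exists2 C, P C & forall D, P D -> D `<=` C -> D = C.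
Proof.
move=> lbP; pose R (A B : sig P) := `[< sval B `<=` sval A >].
have [||||[C PC] Cmin] := @Zorn _ R.
- by move=> A; apply/asboolP.
- by move=> A B C /asboolP AB /asboolP BC; apply/asboolP; exact: subset_trans BC AB.
- by move=> [A PA] [B PB] /asboolP BA /asboolP AB; apply: eq_exist; exact/seteqP.
- move=> F totF; have [||X PX XF] := lbP (sval @` F).
  + by move=> _ [[A PA] _ <-].
  + move=> _ _ [A FA <-] [B FB <-].
    by case: (totF A B FA FB) => /asboolP; [right|left].
  by exists (exist _ X PX) => A FA; apply/asboolP; apply: XF; exists A.
exists C => // D PD DC.
by have /(congr1 sval) := Cmin (exist _ D PD) (asboolT DC).
Qed.

Section CompactSpace.
Context {T : topologicalType}.
Hypothesis cT : compact [set: T].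

Lemma compact_directed_bigcap (K : set T) (I : Type) (D : set I) (X : I -> set T) :
  closed K -> K !=set0 ->
  (forall i, D i -> closed (X i)) -> (forall i, D i -> K `&` X i !=set0) ->
  (forall i j, D i -> D j -> exists2 k, D k & X k `<=` X i `&` X j) ->
  K `&` \bigcap_(i in D) X i !=set0.
Proof.
move=> cK [t Kt] cX KX0 dirX.
have [[i0 Di0]|D0] := pselect (exists i, D i); last first.
  by exists t; split=> // i Di; case: D0; exists i.
have FX : ProperFilter (filter_from D (fun i => K `&` X i)).
  apply: filter_from_proper => //; apply: filter_from_filter; first by exists i0.
  move=> i j Di Dj; have [k Dk Xk] := dirX i j Di Dj.
  by exists k => // z [Kz /Xk[]].
have [|p [_]] := cT FX; first by exists i0.
rewrite clusterE => clp.
have KXp i : D i -> (K `&` X i) p.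
  move=> Di; rewrite ((closure_id _).1 (closedI cK (cX i Di))).
  by apply: clp; exists i.
by exists p; split=> [|i Di]; [exact: (KXp i0 Di0).1|exact: (KXp i Di).2].
Qed.

Definition quasi_component (x : T) :=
  \bigcap_(V in [set V | clopen V /\ V x]) V.

Lemma quasi_component_closed x : closed (quasi_component x).
Proof. by apply: closed_bigI => V [[]]. Qed.

Lemma quasi_component_refl x : quasi_component x x.
Proof. by move=> V []. Qed.

Lemma quasi_component_sub_open x U : open U -> quasi_component x `<=` U ->
  exists V, [/\ clopen V, V x & V `<=` U].
Proof.
move=> oU QU; apply: contrapT => noV.
have [|||||z [_ Qz]] := @compact_directed_bigcap setT _ [set V | clopen V /\ V x]
    (fun V => V `&` ~` U).
- exact: closedT.
- by exists x.
- by move=> V [[_ cV] _]; apply: closedI => //; exact: open_closedC.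
- move=> V [clV Vx]; apply: contrapT => VU; apply: noV; exists V; split=> // y Vy.
  by apply: contrapT => Uy; apply: VU; exists y.
- move=> V1 V2 [clV1 V1x] [clV2 V2x]; exists (V1 `&` V2); last by move=> y [[]].
  by split; [exact: clopenI|].
have Uz : U z by apply: QU => V QV; have [] := Qz V QV.
by have [_] := Qz setT (conj clopenT I).
Qed.

Lemma separated_closedUl (A B : set T) : separated A B -> closed (A `|` B) -> closed A.
Proof.
move=> [clAB _] cAB; apply/closure_id/seteqP; split; first exact: subset_closure.
move=> z Az; have [//|Bz] := cAB z (closureS (@subsetUl _ A B) Az).
by case: ((disjoints_subset _ _).1 clAB z Az Bz).
Qed.

Lemma compact_closed_separation : hausdorff_space T -> forall A B : set T,
  closed A -> closed B -> A `&` B = set0 ->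
  exists U V, [/\ open U, open V, A `<=` U, B `<=` V & U `&` V = set0].
Proof.
move=> hT A B cA cB AB.
have sB : set_nbhs A (~` B).
  apply/set_nbhsP; exists (~` B); split=> //; first exact: closed_openC.
  exact/disjoints_subset.
have [U /set_nbhsP[O [oO AO OU]] clU] := compact_normal hT cT cA sB.
exists O, (~` closure U); split=> //.
- exact/closed_openC/closed_closure.
- by move=> b Bb clb; exact: clU b clb Bb.
- by apply/disjoints_subset => z Oz; rewrite setCK; exact/subset_closure/OU.
Qed.

Lemma quasi_component_subUl x A B : open A -> open B -> A `&` B = set0 ->
  quasi_component x `<=` A `|` B -> A x -> quasi_component x `<=` A.
Proof.
move=> oA oB AB QAB Ax z Qz.
have [V [[oV cV] Vx VAB]] := quasi_component_sub_open (openU oA oB) QAB.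
suff : (V `&` A) z by case.
apply: Qz; split; last by split.
split; first exact: openI.
have -> : V `&` A = V `&` ~` B.
  apply/seteqP; split=> y [Vy ABy]; split=> //.
    exact: (disjoints_subset _ _).1 AB y ABy.
  by case: (VAB y Vy).
exact: closedI cV (open_closedC oB).
Qed.

Lemma quasi_component_connected x :
  hausdorff_space T -> connected (quasi_component x).
Proof.
move=> hT; apply/connectedP => E [E0 QE sepE].
have cQ := @quasi_component_closed x; rewrite QE in cQ.
have cE0 := separated_closedUl sepE cQ.
have cE1 : closed (E true).
  by apply: (@separated_closedUl _ (E false)); [rewrite separatedC|rewrite setUC].
have [U0 [U1 [oU0 oU1 EU0 EU1 U01]]] :=
  compact_closed_separation hT cE0 cE1 (separated_disjoint sepE).
have QU : quasi_component x `<=` U0 `|` U1.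
  by rewrite QE => z [/EU0|/EU1] ?; [left|right].
have := @quasi_component_refl x; rewrite {1}QE => -[/EU0 U0x|/EU1 U1x].
- have [z Ez] := E0 true; have Qz : quasi_component x z by rewrite QE; right.
  have U0z := quasi_component_subUl oU0 oU1 U01 QU U0x Qz.
  exact: (disjoints_subset _ _).1 U01 z U0z (EU1 _ Ez).
- have [z Ez] := E0 false; have Qz : quasi_component x z by rewrite QE; left.
  rewrite setIC in U01; rewrite setUC in QU.
  have U1z := quasi_component_subUl oU1 oU0 U01 QU U1x Qz.
  exact: (disjoints_subset _ _).1 U01 z U1z (EU0 _ Ez).
Qed.

Lemma compact_totally_disconnected_zero_dimensional :
  hausdorff_space T -> totally_disconnected [set: T] -> zero_dimensional T.
Proof.
move=> hT tdT x y /eqP xy; apply: contrapT => noV; apply: xy.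
have Qy : quasi_component x y.
  by move=> V [clV Vx]; apply: contrapT => nVy; apply: noV; exists V.
have : connected_component [set: T] x y.
  exists (quasi_component x) => //.
  by split=> //; [exact: quasi_component_refl|exact: quasi_component_connected].
by rewrite tdT.
Qed.

End CompactSpace.

Section TopologicalGroup.
Context {T : topologicalType} (g : topGroup T).
Local Notation "x * y" := (gmul g x y).
Local Notation "x ^-1" := (ginv g x).
Local Notation one := (gone g).
Local Notation subgroup := (subgroup g).
Local Notation setmul := (setmul g).

Let mulgA := gmulA g.
Let mul1g := gmul1 g.
Let mulVg := gmulV g.

Lemma mulgV x : x * x^-1 = one.
Proof.
rewrite -[x * x^-1]mul1g -[in X in X * _](mulVg (x^-1)).
by rewrite -mulgA [x^-1 * (x * _)]mulgA mulVg mul1g mulVg.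
Qed.

Lemma mulg1 x : x * one = x.
Proof. by rewrite -(mulVg x) mulgA mulgV mul1g. Qed.

Lemma mulKg x y : x^-1 * (x * y) = y.
Proof. by rewrite mulgA mulVg mul1g. Qed.

Lemma mulKVg x y : x * (x^-1 * y) = y.
Proof. by rewrite mulgA mulgV mul1g. Qed.

Lemma mulgK x y : (y * x) * x^-1 = y.
Proof. by rewrite -mulgA mulgV mulg1. Qed.

Lemma mulgI x y z : x * y = x * z -> y = z.
Proof. by move=> e; rewrite -(mulKg x y) e mulKg. Qed.

Lemma invgK x : (x^-1)^-1 = x.
Proof. by apply: (@mulgI (x^-1)); rewrite mulgV mulVg. Qed.

Lemma invMg x y : (x * y)^-1 = y^-1 * x^-1.
Proof. by apply: (@mulgI (x * y)); rewrite mulgV -mulgA mulKVg mulgV. Qed.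

Lemma invg1 : one^-1 = one.
Proof. by rewrite -[one^-1]mul1g mulgV. Qed.

Definition gconj a y := a * (y * a^-1).

Lemma gconjg1 a : gconj a one = one.
Proof. by rewrite /gconj mul1g mulgV. Qed.

Lemma gconjM a y z : gconj a (y * z) = gconj a y * gconj a z.
Proof. by rewrite /gconj -!mulgA mulKg. Qed.

Lemma gconjV a y : gconj a y^-1 = (gconj a y)^-1.
Proof. by rewrite /gconj !invMg invgK mulgA. Qed.

Lemma gconjgM a b y : gconj a (gconj b y) = gconj (a * b) y.
Proof. by rewrite /gconj invMg -!mulgA. Qed.

Lemma gconj1g y : gconj one y = y.
Proof. by rewrite /gconj invg1 mulg1 mul1g. Qed.

Definition normalised (L : set T) := forall a l, L l -> L (gconj a l).

Lemma invariant_underTP L : invariant_under g [set: T] L <-> normalised L.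
Proof.
split=> [invL a l Ll|nL a _]; first by rewrite -(invL a I); exists l.
apply/seteqP; split=> [_ [l Ll <-]|l Ll]; first exact: nL.
exists (gconj a^-1 l); first exact: nL.
by rewrite -/(gconj a _) gconjgM mulgV gconj1g.
Qed.

Section Subgroup.
Variable A : set T.
Hypothesis sA : subgroup A.

Lemma subgroup1 : A one. Proof. by case: sA. Qed.

Lemma subgroupM x y : A x -> A y -> A (x * y).
Proof. by case: sA => _ + _; apply. Qed.

Lemma subgroupV x : A x -> A x^-1. Proof. by case: sA => _ _; apply. Qed.

Lemma subgroupVr x : A x^-1 -> A x.
Proof. by move/subgroupV; rewrite invgK. Qed.

End Subgroup.

Lemma subgroupI A B : subgroup A -> subgroup B -> subgroup (A `&` B).
Proof.
move=> sA sB; split=> [|x y [Ax Bx] [Ay By]|x [Ax Bx]].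
- by split; apply: subgroup1.
- by split; apply: subgroupM.
- by split; apply: subgroupV.
Qed.

Lemma subgroup_bigcap (F : set (set T)) :
  (forall C, F C -> subgroup C) -> subgroup (\bigcap_(C in F) C).
Proof.
move=> sF; split=> [C /sF /subgroup1 //|x y Fx Fy C FC|x Fx C FC].
  exact: (subgroupM (sF C FC) (Fx C FC) (Fy C FC)).
exact: (subgroupV (sF C FC) (Fx C FC)).
Qed.

Lemma meet1P A B : subgroup A -> subgroup B ->
  A `&` B = [set one] <-> forall x, A x -> B x -> x = one.
Proof.
move=> sA sB; split=> [AB1 x Ax Bx|AB1].
  by have : (A `&` B) x by []; rewrite AB1.
apply/seteqP; split=> [x [Ax Bx]|_ ->]; first exact: AB1.
by split; apply: subgroup1.
Qed.

Lemma subgroup_setmul A B : subgroup A -> subgroup B -> normalised B ->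
  subgroup (setmul A B).
Proof.
move=> sA sB nB; split.
- by exists one; [exact: subgroup1|exists one; [exact: subgroup1|rewrite mulg1]].
- move=> _ _ [a1 Aa1 [b1 Bb1 ->]] [a2 Aa2 [b2 Bb2 ->]].
  exists (a1 * a2); first exact: subgroupM.
  exists (gconj a2^-1 b1 * b2); first by apply: subgroupM => //; exact: nB.
  by rewrite /gconj invgK !mulgA mulgK.
- move=> _ [a Aa [b Bb ->]]; exists a^-1; first exact: subgroupV.
  exists (gconj a b^-1); first by apply: nB; exact: subgroupV.
  by rewrite /gconj mulKg invMg.
Qed.

Lemma setmulC_subgroup X A B : subgroup X -> subgroup A -> subgroup B ->
  X = setmul A B -> X = setmul B A.
Proof.
move=> sX sA sB eX; apply/seteqP; split.
  move=> x /(subgroupV sX); rewrite eX => -[a Aa [b Bb e]].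
  exists b^-1; first exact: subgroupV.
  by exists a^-1; [exact: subgroupV|rewrite -invMg -e invgK].
move=> _ [b Bb [a Aa ->]]; apply: (subgroupVr sX); rewrite invMg eX.
by exists a^-1; [exact: subgroupV|exists b^-1; [exact: subgroupV|]].
Qed.

Lemma continuous_mulg (X : topologicalType) (f h : X -> T) :
  continuous f -> continuous h -> continuous (fun x => f x * h x).
Proof.
move=> cf ch x; apply: (@continuous2_cvg _ _ _ _ _ _ f h (gmul g)).
- exact: (@gmul_cont _ g (f x, h x)).
- exact: cf.
- exact: ch.
Qed.

Lemma continuous_invg (X : topologicalType) (f : X -> T) :
  continuous f -> continuous (fun x => (f x)^-1).
Proof. by move=> cf x; apply: continuous_comp; [exact: cf|exact: ginv_cont]. Qed.

Lemma continuous_mulgl a : continuous (fun z => a * z).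
Proof.
by apply: continuous_mulg; [exact: cst_continuous|move=> z; exact: cvg_id].
Qed.

Lemma open_setmul A W : open W -> open (setmul A W).
Proof.
move=> oW; have -> : setmul A W = \bigcup_(a in A) ((fun z => a^-1 * z) @^-1` W).
  apply/seteqP; split=> [_ [a Aa [w Ww ->]]|z [a Aa /= Wz]].
    by exists a => //=; rewrite mulKg.
  by exists a => //; exists (a^-1 * z) => //; rewrite mulKVg.
apply: bigcup_open => a _; apply: open_comp => // z _.
exact: continuous_mulgl.
Qed.

Lemma open_subgroup_closed S : subgroup S -> open S -> closed S.
Proof.
move=> sS oS; rewrite -openC.
have -> : ~` S = \bigcup_(y in ~` S) ((fun z => y^-1 * z) @^-1` S).
  apply/seteqP; split=> [y nSy|z [y nSy /= Sz] Sz']; last apply: nSy.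
    by exists y => //=; rewrite mulVg; exact: subgroup1.
  by have := subgroupM sS Sz' (subgroupV sS Sz); rewrite invMg invgK mulKVg.
apply: bigcup_open => y _; apply: open_comp => // z _.
exact: continuous_mulgl.
Qed.

Lemma nbhs1_subgroup_open S : subgroup S -> nbhs one S -> open S.
Proof.
move=> sS nS; rewrite openE => s Ss; rewrite -(mulVg s) in nS.
have nS' : nbhs s ((fun z => s^-1 * z) @^-1` S) := continuous_mulgl nS.
apply: filterS nS' => z /= Sz.
by rewrite -(mulKVg s z); exact: subgroupM.
Qed.

Lemma closed_setmul : compact [set: T] -> hausdorff_space T ->
  forall A B, closed A -> closed B -> closed (setmul A B).
Proof.
move=> cT hT A B cA cB.
have -> : setmul A B = (fun p : T * T => p.1 * p.2) @` (A `*` B).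
  apply/seteqP; split=> [_ [a Aa [b Bb ->]]|_ [[a b] [/= Aa Bb] <-]].
    by exists (a, b).
  by exists a => //; exists b.
apply: compact_closed => //; apply: continuous_compact.
  exact/continuous_subspaceT/gmul_cont.
by apply: compact_setX; exact: subclosed_compact cT _.
Qed.

Definition normal_stabilizer (V : set T) :=
  [set y | forall a v, V v -> V (v * gconj a y) /\ V (v * gconj a y^-1)].

Lemma subgroup_normal_stabilizer V : subgroup (normal_stabilizer V).
Proof.
split=> [a v Vv|y z Wy Wz a v Vv|y Wy a v Vv].
- by rewrite invg1 gconjg1 mulg1.
- rewrite invMg !gconjM; split; rewrite mulgA.
    exact: (Wz a _ (Wy a v Vv).1).1.
  exact: (Wy a _ (Wz a v Vv).2).2.
- by rewrite invgK; have [] := Wy a v Vv.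
Qed.

Lemma normalised_normal_stabilizer V : normalised (normal_stabilizer V).
Proof. by move=> b y Wy a v Vv; rewrite -gconjV !gconjgM; exact: Wy. Qed.

Lemma normal_stabilizer_sub V : V one -> normal_stabilizer V `<=` V.
Proof. by move=> V1 y /(_ one one V1) [+ _]; rewrite gconj1g mul1g. Qed.

Lemma nbhs1_normal_stabilizer : compact [set: T] ->
  forall V, open V -> closed V -> nbhs one (normal_stabilizer V).
Proof.
move=> cT V oV cV.
have /compact_near_coveringP cov : compact ([set: T] `*` V).
  by apply: compact_setX => //; exact: subclosed_compact cT _.
have cfst (X Y : topologicalType) : continuous (@fst X Y).
  by move=> ?; exact: cvg_fst.
have csnd (X Y : topologicalType) : continuous (@snd X Y).
  by move=> ?; exact: cvg_snd.
have near_stab h : continuous h -> h one = one -> forall p : T * T, V p.2 ->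
    \forall q \near p & y \near one, V (q.2 * gconj q.1 (h y)).
  move=> ch h1 p Vp.
  have cf : continuous (fun z : (T * T) * T => z.1.2 * gconj z.1.1 (h z.2)).
    have c11 : continuous (fun z : (T * T) * T => z.1.1).
      by move=> z; apply: continuous_comp; [exact: cfst|exact: cfst].
    apply: continuous_mulg.
      by move=> z; apply: continuous_comp; [exact: cfst|exact: csnd].
    apply: continuous_mulg => //; apply: continuous_mulg; last exact: continuous_invg.
    by move=> z; apply: continuous_comp; [exact: csnd|exact: ch].
  have nV : nbhs (p.2 * gconj p.1 (h one)) V.
    by rewrite h1 gconjg1 mulg1; exact: open_nbhs_nbhs.
  exact: (cf (p, one) V nV).
(* Tube lemma: the neighbourhood of one is uniform over the compact set of
   pairs (a, v). *)
apply: filterS (cov T (nbhs one)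
    (fun y p => V (p.2 * gconj p.1 y) /\ V (p.2 * gconj p.1 y^-1)) _ _).
  by move=> y Wy a v Vv; exact: (Wy (a, v)).
move=> p [_ Vp]; have n1 := near_stab id (fun z => cvg_id) erefl p Vp.
have n2 := near_stab _ (continuous_invg (fun z => cvg_id)) invg1 p Vp.
by apply: filterS (filterI n1 n2) => -[q y] [].
Qed.

Lemma profinite_open_normal_subgroup x : profinite g -> x <> one ->
  exists W, [/\ open W, subgroup W, normalised W & ~ W x].
Proof.
move=> [cT hT tdT] x1.
have [V [[oV cV] V1 nVx]] : exists V, [/\ clopen V, V one & ~ V x].
  apply: compact_totally_disconnected_zero_dimensional => //.
  by apply/eqP => /esym.
exists (normal_stabilizer V); split.
- apply: nbhs1_subgroup_open; first exact: subgroup_normal_stabilizer.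
  exact: nbhs1_normal_stabilizer.
- exact: subgroup_normal_stabilizer.
- exact: normalised_normal_stabilizer.
- by move/(normal_stabilizer_sub V1).
Qed.

Lemma open_in_subgroup N U W : subgroup N -> subgroup U -> U `<=` N ->
  subgroup W -> open W -> W `&` N `<=` U -> open_in N U.
Proof.
move=> sN sU UN sW oW WNU; exists (setmul U W); first exact: open_setmul.
apply/seteqP; split=> [u Uu|_ [[u Uu [w Ww ->]] Nuw]].
  split; last exact: UN.
  by exists u => //; exists one; [exact: subgroup1|rewrite mulg1].
have Nw : N w by have := subgroupM sN (subgroupV sN (UN _ Uu)) Nuw; rewrite mulKg.
exact: (subgroupM sU Uu (WNU w (conj Ww Nw))).
Qed.

Section NormalSupplement.
Hypothesis profG : profinite g.
Variables N M : set T.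
Hypotheses (sN : subgroup N) (cN : closed N) (nN : normalised N).
Hypotheses (sM : subgroup M) (cM : closed M) (MN : M `<=` N).

Definition normal_supplement (C : set T) :=
  [/\ closed C, subgroup C, C `<=` N, normalised C & N = setmul M C].

Lemma normal_supplement_chain F : F `<=` normal_supplement ->
  total_on F subset -> normal_supplement (N `&` \bigcap_(C in F) C).
Proof.
move=> FS totF; have [cT _ _] := profG; split.
- by apply: closedI cN (closed_bigI _) => C /FS[].
- by apply: subgroupI sN (subgroup_bigcap _) => C /FS[].
- by move=> ? [].
- move=> a l [Nl Fl]; split=> [|C FC]; first exact: nN.
  by have [_ _ _ nC _] := FS C FC; apply: nC; exact: Fl.
apply/seteqP; split=> [n Nn|_ [m Mm [c [Nc _] ->]]]; last first.
  exact: (subgroupM sN (MN Mm) Nc).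
have [||||m [Mm Fm]] := @compact_directed_bigcap _ cT M _ F
  (fun C => (fun m => m^-1 * n) @^-1` C) cM.
- by exists one; exact: subgroup1.
- move=> C /FS[cC _ _ _ _]; apply: preimage_closed => // z _.
  apply: continuous_mulg; last exact: cst_continuous.
  by apply: continuous_invg => ?; exact: cvg_id.
- move=> C /FS[_ _ _ _ eN]; move: Nn; rewrite {1}eN => -[m Mm [c Cc ->]].
  by exists m; split=> //=; rewrite mulKg.
- move=> C1 C2 FC1 FC2; have [C12|C21] := totF C1 C2 FC1 FC2.
    by exists C1 => // z Cz; split=> //; exact: C12.
  by exists C2 => // z Cz; split=> //; exact: C21.
exists m => //; exists (m^-1 * n); last by rewrite mulKVg.
by split=> //; exact: (subgroupM sN (subgroupV sN (MN Mm)) Nn).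
Qed.

Lemma minimal_normal_supplement :
  exists2 C, normal_supplement C & forall D, normal_supplement D -> D `<=` C -> D = C.
Proof.
apply: Zorn_minimal => F FS totF; exists (N `&` \bigcap_(C in F) C).
  exact: normal_supplement_chain.
by move=> C FC z [_ /(_ C FC)].
Qed.

Lemma normal_supplement_setI C E W : normal_supplement C ->
  subgroup E -> normalised E -> subgroup W -> open W -> normalised W ->
  N = setmul (setmul (M `&` C) (W `&` N)) E ->
  normal_supplement (C `&` setmul E W).
Proof.
move=> [cC sC CN nC eN] sE nE sW oW nW eNE.
have sEW : subgroup (setmul E W) by exact: subgroup_setmul.
split.
- exact: closedI cC (open_subgroup_closed sEW (open_setmul _ oW)).
- exact: subgroupI.
- by move=> z [/CN].
- move=> a l [Cl [e Ee [w Ww elw]]]; split; first exact: nC.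
  rewrite elw gconjM; exists (gconj a e); first exact: nE.
  by exists (gconj a w); first exact: nW.
apply/seteqP; split=> [n|_ [m Mm [c [Cc _] ->]]]; last first.
  exact: (subgroupM sN (MN Mm) (CN _ Cc)).
rewrite {1}eN => -[m Mm [c Cc ->]].
move: (CN _ Cc); rewrite eNE => -[_ [d [Md Cd] [w [Ww _] ->]] [e Ee ec]].
exists (m * d); first exact: subgroupM.
exists (d^-1 * c); last by rewrite -mulgA mulKVg.
split; first exact: (subgroupM sC (subgroupV sC Cd) Cc).
exists e => //; exists (gconj e^-1 w); first exact: nW.
by rewrite ec /gconj invgK -!mulgA mulKg mulKVg.
Qed.

Hypothesis complementN : forall K, subgroup K -> K `<=` N -> open_in N K ->
  exists L, perm_complement g N K L /\ invariant_under g [set: T] L.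

Lemma normal_complement : exists C, normal_supplement C /\ M `&` C = [set one].
Proof.
have [C suppC Cmin] := minimal_normal_supplement.
have [_ sC CN _ _] := suppC.
exists C; split=> //; apply/meet1P => // x Mx Cx; apply: contrapT => x1.
have [W [oW sW nW nWx]] := profinite_open_normal_subgroup profG x1.
pose U := setmul (M `&` C) (W `&` N).
have sU : subgroup U.
  apply: subgroup_setmul; [exact: subgroupI|exact: subgroupI|].
  by move=> a w [Ww Nw]; split; [exact: nW|exact: nN].
have UN : U `<=` N.
  by move=> _ [d [Md _] [w [_ Nw] ->]]; exact: (subgroupM sN (MN Md) Nw).
have oU : open_in N U.
  apply: (open_in_subgroup sN sU UN sW oW) => w Ww.
  by exists one; [split; exact: subgroup1|exists w; rewrite ?mul1g].
have [E [[sE EN eNUE UE1] /invariant_underTP nE]] := complementN sU UN oU.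
have suppCEW := normal_supplement_setI suppC sE nE sW oW nW eNUE.
have [_ [e Ee [w Ww exw]]] : (C `&` setmul E W) x.
  by rewrite (Cmin _ suppCEW) //; exact: subIsetl.
have Nw : N w.
  rewrite -(mulKg e w) -exw.
  exact: (subgroupM sN (subgroupV sN (EN _ Ee)) (CN _ Cx)).
have Ue : U e.
  exists x; first by split.
  by exists w^-1; [split; [exact: subgroupV|exact: subgroupV]|rewrite exw mulgK].
by apply: nWx; rewrite exw ((meet1P sU sE).1 UE1 e Ue Ee) mul1g.
Qed.

End NormalSupplement.

Section ComplementProduct.
Variables H N K C LH : set T.
Hypotheses (sH : subgroup H) (sN : subgroup N) (nN : normalised N).
Hypothesis eG : [set: T] = setmul H N.
Hypotheses (sK : subgroup K) (sC : subgroup C) (nC : normalised C) (CN : C `<=` N).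
Hypotheses (eN : N = setmul (K `&` N) C) (KNC1 : K `&` N `&` C = [set one]).
Hypothesis compLH : perm_complement g H (H `&` setmul K N) LH.

Lemma complement_setmulT : [set: T] = setmul K (setmul LH C).
Proof.
have [sLH LHH eH _] := compLH.
have sL : subgroup (setmul LH C) := subgroup_setmul sLH sC nC.
apply: setmulC_subgroup sL sK _ => //; apply/seteqP; split=> // z _.
have : [set: T] z by []; rewrite (setmulC_subgroup _ sH sN eG) //.
move=> [n Nn [h Hh ->]]; move: (subgroupV sH Hh); rewrite eH.
move=> [_ [_ [k Kk [n1 Nn1 ->]]] [l LHl ehl]].
have := subgroupM sN (nN l Nn) (subgroupV sN Nn1).
rewrite (setmulC_subgroup sN (subgroupI sK sN) sC eN) => -[c Cc [m [Km _] ecm]].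
exists (l^-1 * c); first by exists l^-1; [exact: subgroupV|exists c].
exists (m * k^-1); first exact: (subgroupM sK Km (subgroupV sK Kk)).
rewrite -[h]invgK ehl !invMg [RHS]mulgA -[l^-1 * c * m]mulgA -ecm.
by rewrite /gconj !mulgA mulVg mul1g.
Qed.

Lemma complement_meet1 : K `&` setmul LH C = [set one].
Proof.
have [sLH LHH _ KL1] := compLH.
have sKN : subgroup (setmul K N) := subgroup_setmul sK sN nN.
apply/meet1P => // [|x Kx [l LHl [c Cc exlc]]]; first exact: subgroup_setmul.
have KNl : (H `&` setmul K N) l.
  split; first exact: LHH.
  by exists x => //; exists c^-1; [exact/CN/(subgroupV sC)|rewrite exlc mulgK].
have l1 := (meet1P (subgroupI sH sKN) sLH).1 KL1 l KNl LHl.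
have KNc : (K `&` N) c by split; [move: Kx; rewrite exlc l1 mul1g|exact: CN].
by rewrite exlc l1 ((meet1P (subgroupI sK sN) sC).1 KNC1 c KNc Cc) mulg1.
Qed.

Lemma perm_complement_setmul : perm_complement g [set: T] K (setmul LH C).
Proof.
have [sLH _ _ _] := compLH.
split; [exact: subgroup_setmul sLH sC nC|by []|exact: complement_setmulT|].
exact: complement_meet1.
Qed.

End ComplementProduct.

End TopologicalGroup.

Theorem lemma2p11 (T : topologicalType) (g : topGroup T) (H N : set T) :
  profinite g ->
  closed H -> closed N ->
  semidirect g [set: T] H N ->
  profinite_C_in g H ->
  (forall K, subgroup g K -> K `<=` N -> open_in N K ->
     exists L, perm_complement g N K L /\ invariant_under g [set: T] L) ->
  profinite_C_in g [set: T].
Proof.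
move=> profG cH cN [[sH sN] _ [_ /invariant_underTP nN] eG _] CH complN.
move=> K sK _ [K0 cK0 eK]; have [cT hT _] := profG.
have cK : closed K by rewrite eK setIT.
have [C [[cC sC CN nC eN] KNC1]] := normal_complement profG sN cN nN
  (subgroupI sK sN) (closedI cK cN) (@subIsetr _ K N) complN.
have sKN := subgroup_setmul sK sN nN.
have clKN : closed_in H (H `&` setmul g K N).
  by exists (setmul g K N); [exact: closed_setmul|rewrite setIC].
have [LH [[LH0 cLH0 eLH] compLH]] := CH _ (subgroupI sH sKN) (@subIsetl _ H _) clKN.
exists (setmul g LH C); split; last first.
  exact: (perm_complement_setmul sH sN nN eG sK sC nC CN eN KNC1 compLH).
exists (setmul g LH C); last by rewrite setIT.
by apply: closed_setmul => //; rewrite eLH; exact: closedI.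
Qed.
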